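(* Let $j,k_G,k_H$ be positive integers with $j\le k_G\le k_H$, let $G$ be a $(j,k_G)$-biclique and $H$ a $(j,k_H)$-biclique, with $P_G(x)=(x)_{k_G}g(x)$ and $P_H(x)=(x)_{k_H}h(x)$. Let $c$ be an integer. Then $g(x)=(-1)^j h(-x+c)$ if and only if, for all $0\le i\le j$, $$m_{\bar G}^i=\sum_{l=0}^{i}(-1)^l\, m_{\bar H}^l\binom{j-l}{j-i}\,(k_G+k_H+j-c-l-1)_{i-l}.$$
   Context: All graphs are finite and simple. For integers $1\le j\le k$, a $(j,k)$-biclique is a graph whose vertex set is the disjoint union of a $j$-clique and a $k$-clique, with an arbitrary set of additional edges each joining a vertex of the $j$-clique to a vertex of the $k$-clique; $\bar G$ denotes the complement of $G$. $P_G(x)$ is the chromatic polynomial, and $(x)_n=x(x-1)\cdots(x-n+1)$ the falling factorial ($(x)_0=1$). For a $(j,k)$-biclique $G$, $(x)_k$ divides $P_G(x)$ and $g(x)=P_G(x)/(x)_k$ is a polynomial of degree $j$ (the interesting factor). $m_F^i$ denotes the number of matchings with $i$ edges in a graph $F$. *)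

From HB Require Import structures.
From mathcomp Require Import all_boot all_order all_algebra.
Set Implicit Arguments. Unset Strict Implicit. Unset Printing Implicit Defensive.
Import Order.TTheory GRing.Theory Num.Theory.
Local Open Scope ring_scope.

(* A finite simple graph is a symmetric irreflexive relation e on a finType. *)

Definition compl_rel (V : finType) (e : rel V) : rel V :=
  fun x y => (x != y) && ~~ e x y.

Definition is_edge (V : finType) (e : rel V) (E : {set V}) : bool :=
  [exists x, exists y, (e x y) && (E == [set x; y])].

Definition is_matching (V : finType) (e : rel V) (M : {set {set V}}) : bool :=
  [forall E in M, is_edge e E] &&
  [forall E1 in M, forall E2 in M, (E1 != E2) ==> [disjoint E1 & E2]].

Definition nmatch (V : finType) (e : rel V) (i : nat) : nat :=
  #|[set M : {set {set V}} | is_matching e M & #|M| == i]|.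

Definition ncol (V : finType) (e : rel V) (n : nat) : nat :=
  #|[set f : {ffun V -> 'I_n} | [forall x, forall y, e x y ==> (f x != f y)]]|.

Definition is_chromatic_poly (V : finType) (e : rel V) (p : {poly int}) : Prop :=
  forall n : nat, p.[n%:R] = (ncol e n)%:R.

Definition falling (n : nat) : {poly int} := \prod_(i < n) ('X - (i%:R)%:P).

Definition biclique (j k : nat) (B : 'I_j -> 'I_k -> bool) : rel ('I_j + 'I_k)%type :=
  fun x y => match x, y with
  | inl a, inl b => a != b
  | inr a, inr b => a != b
  | inl a, inr b => B a b
  | inr b, inl a => B a b
  end.

From HB Require Import structures.
From mathcomp Require Import all_boot all_order all_algebra.
From mathcomp Require Import ring.
Import Order.TTheory GRing.Theory Num.Theory.

Set Implicit Arguments. Unset Strict Implicit. Unset Printing Implicit Defensive.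

(* A proper colouring of a (j,k)-biclique G sends each vertex of the j-clique to at most one
   vertex of the k-clique of the same colour.  Equal colours only occur on non-edges, so these
   pairs form a matching of the complement of G, all of whose edges join the two cliques.
   Merging each matched pair, the colourings inducing a given matching with i edges are the
   injective colourings of j + k - i vertices, hence P_G(x) = sum_i m^i (x)_(j+k-i) and
   g(x) = sum_i m^i (x - k)_(j-i).  The polynomials (x - k)_m are monic of degree m, so these
   coordinates are unique.  Expanding (-1)^j h(c - x) in the same basis by the reflection
   (-1)^m (-y)_m = (y + m - 1)_m and the Vandermonde identity
   (x + y)_n = sum_r C(n,r) (x)_(n-r) (y)_r gives the coordinates on the right-hand side. *)

Section Biclique.
Variables (j k : nat) (B : 'I_j -> 'I_k -> bool).
Local Notation V := ('I_j + 'I_k)%type.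
Local Notation pfun := {ffun 'I_j -> option 'I_k}.

(* Matchings of the complement of the biclique, encoded as partial injections from the
   j-clique to the k-clique avoiding the cross edges [B]. *)
Definition cross_matching (p : pfun) : bool :=
  [forall a, forall a', (p a != None) ==> (p a == p a') ==> (a == a')] &&
  [forall a, forall b, (p a == Some b) ==> ~~ B a b].

Lemma cross_matchingP (p : pfun) :
  reflect ((forall a a' b, p a = Some b -> p a' = Some b -> a = a') /\
           (forall a b, p a = Some b -> ~~ B a b))
          (cross_matching p).
Proof.
apply: (iffP andP) => [[/forallP inj /forallP nB]|[inj nB]]; split.
- by move=> a a' b pa pa'; apply/eqP; move: (forallP (inj a) a'); rewrite pa pa' eqxx.
- by move=> a b pa; move: (forallP (nB a) b); rewrite pa eqxx.
- apply/forallP=> a; apply/forallP=> a'; case pa: (p a) => [b|] //=.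
  by apply/implyP=> /eqP pa'; apply/eqP; apply: inj pa (esym pa').
- by apply/forallP=> a; apply/forallP=> b; apply/implyP=> /eqP; apply: nB.
Qed.

Definition cross_size (p : pfun) := #|[set a | p a != None]|.

Lemma cross_size_le (p : pfun) : cross_size p <= j.
Proof. by rewrite -[j in _ <= j](card_ord j) max_card. Qed.

Definition ncross (i : nat) := #|[set p | cross_matching p & cross_size p == i]|.

Section Colourings.
Variable n : nat.

Definition proper_col (f : {ffun V -> 'I_n}) :=
  [forall x, forall y, biclique B x y ==> (f x != f y)].

Lemma proper_colP f x y : proper_col f -> biclique B x y -> f x != f y.
Proof. by move=> /forallP/(_ x)/forallP/(_ y)/implyP. Qed.

Definition colour_matching (f : {ffun V -> 'I_n}) : pfun :=
  [ffun a => [pick b | f (inr b) == f (inl a)]].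

Lemma colour_matchingE f a b :
  proper_col f -> (colour_matching f a == Some b) = (f (inr b) == f (inl a)).
Proof.
move=> Pf; rewrite ffunE; case: pickP => [b' /eqP fb'|/(_ b) -> //].
apply/idP/idP => [/eqP[<-]|/eqP fb]; first by rewrite fb'.
case: (eqVneq b' b) => [->//|ne].
by move: (proper_colP (x := inr b') (y := inr b) Pf); rewrite /= ne fb fb' eqxx => /(_ isT).
Qed.

Lemma cross_colour_matching f : proper_col f -> cross_matching (colour_matching f).
Proof.
move=> Pf; apply/cross_matchingP; split => [a a' b|a b].
  move=> /eqP; rewrite colour_matchingE // => /eqP f1.
  move=> /eqP; rewrite colour_matchingE // => /eqP f2.
  case: (eqVneq a a') => // ne.
  by move: (proper_colP (x := inl a) (y := inl a') Pf); rewrite /= ne -f1 -f2 eqxx => /(_ isT).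
move=> /eqP; rewrite colour_matchingE // => /eqP f1; apply/negP => Bab.
by move: (proper_colP (x := inl a) (y := inr b) Pf); rewrite /= Bab f1 eqxx => /(_ isT).
Qed.

Section Fibre.
Variable p : pfun.
Hypothesis p_cross : cross_matching p.

Definition unmatched (x : V) : bool := if x is inl a then p a == None else true.
Definition merged := {x : V | unmatched x}.
Definition merged_r (b : 'I_k) : merged := @exist V unmatched (inr b) (erefl true).

Definition merge (x : V) : merged :=
  match x with
  | inr b => merged_r b
  | inl a => match p a as o return (p a = o -> merged) with
             | Some b => fun _ => merged_r b
             | None => fun pa => @exist V unmatched (inl a) (introT eqP pa)
             end (erefl (p a))
  end.

Lemma val_merge x : val (merge x) =
  match x with inl a => if p a is Some b then inr b else inl a | inr b => inr b end.
Proof.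
case: x => [a|b] //=; move: (erefl (p a)); case: {2 3}(p a) => // [b -> //|pa /=].
by rewrite pa.
Qed.

Lemma merge_val (w : merged) : merge (val w) = w.
Proof.
apply: val_inj; rewrite val_merge; case: w => [[a|b] /= ua] //.
by move/eqP: ua => ->.
Qed.

Lemma card_merged : #|{: merged}| = k + (j - cross_size p).
Proof.
rewrite card_sig -sum1_card big_sumType /= addnC !sum1_card card_ord; congr (_ + _).
rewrite /cross_size [#|[set a | _]|](_ : _ = #|[predC [pred a | p a == None]]|).
  by rewrite -[X in X - _](card_ord j) -(cardC [pred a | p a == None]) addnK.
by apply: eq_card => a; rewrite !inE.
Qed.

Definition restrict_col (f : {ffun V -> 'I_n}) : {ffun merged -> 'I_n} :=
  [ffun w => f (val w)].
Definition extend_col (g : {ffun merged -> 'I_n}) : {ffun V -> 'I_n} :=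
  [ffun x => g (merge x)].

Lemma restrict_extend_col g : restrict_col (extend_col g) = g.
Proof. by apply/ffunP => w; rewrite !ffunE merge_val. Qed.

Lemma extend_restrict_col f :
  proper_col f -> colour_matching f = p -> extend_col (restrict_col f) = f.
Proof.
move=> Pf fp; apply/ffunP => x; rewrite !ffunE val_merge.
case: x => [a|b] //; case pa: (p a) => [b|] //.
by apply/eqP; rewrite -colour_matchingE // fp pa.
Qed.

Lemma restrict_col_inj f :
  proper_col f -> colour_matching f = p -> injectiveb (restrict_col f).
Proof.
move=> Pf fp; apply/injectiveP => [[x1 u1] [x2 u2]]; rewrite !ffunE /= => f12.
apply: val_inj => /=; case: (eqVneq x1 x2) => // ne.
have nonadj x y : biclique B x y -> f x = f y -> False.
  by move=> exy fxy; move: (proper_colP Pf exy); rewrite fxy eqxx.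
have unmatched_unique a b : p a == None -> f (inr b) = f (inl a) -> False.
  by rewrite -fp => /eqP pa /eqP; rewrite -colour_matchingE // pa.
case: x1 x2 u1 u2 ne f12 => [a1|b1] [a2|b2] /= u1 u2 ne f12.
- by case: (nonadj (inl a1) (inl a2)) => //=; rewrite (inj_eq (@inl_inj _ _)) in ne.
- by case: (unmatched_unique _ _ u1 (esym f12)).
- by case: (unmatched_unique _ _ u2 f12).
- by case: (nonadj (inr b1) (inr b2)) => //=; rewrite (inj_eq (@inr_inj _ _)) in ne.
Qed.

Lemma extend_col_proper (g : {ffun merged -> 'I_n}) :
  injectiveb g -> proper_col (extend_col g).
Proof.
case/cross_matchingP: p_cross => pinj pnB /injectiveP ginj.
apply/forallP => x; apply/forallP => y; apply/implyP => exy.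
rewrite !ffunE (inj_eq ginj) -(inj_eq val_inj) !val_merge.
case: x y exy => [a|b] [a'|b'] /= exy.
- case pa: (p a) => [c|]; case pa': (p a') => [c'|] //.
  by apply: contraNneq exy => [[ec]]; rewrite -ec in pa'; rewrite (pinj _ _ _ pa pa') eqxx.
- by case pa: (p a) => [c|] //; apply: contraNneq (pnB _ _ pa) => -[->].
- by case pa': (p a') => [c|] //; apply: contraNneq (pnB _ _ pa') => [[<-]].
- by apply: contraNneq exy => [[->]]; rewrite eqxx.
Qed.

Lemma colour_matching_extend (g : {ffun merged -> 'I_n}) :
  injectiveb g -> colour_matching (extend_col g) = p.
Proof.
move=> /injectiveP ginj; apply/ffunP => a; rewrite ffunE.
have sameE b : (extend_col g (inr b) == extend_col g (inl a)) = (inr b == val (merge (inl a))).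
  rewrite !ffunE (inj_eq ginj) -(inj_eq val_inj) //.
case: pickP => [b|nob] /=.
  by rewrite sameE val_merge; case: (p a) => [c|] // /eqP [->].
case pa: (p a) => [c|] //; move: (nob c).
by rewrite sameE val_merge pa eqxx.
Qed.

Lemma card_colour_fibre :
  #|[set f | proper_col f & colour_matching f == p]| = n ^_ (k + (j - cross_size p)).
Proof.
rewrite -card_merged -[n in n ^_ _](card_ord n) -card_inj_ffuns.
rewrite -(card_in_imset (f := restrict_col)); last first.
  move=> f1 f2; rewrite !inE => /andP[P1 /eqP p1] /andP[P2 /eqP p2] f12.
  by rewrite -(extend_restrict_col P1 p1) -(extend_restrict_col P2 p2) f12.
apply: eq_card => g; rewrite [in RHS]inE; apply/imsetP/idP => [[f]|ginj].
  by rewrite inE => /andP[Pf /eqP fp] ->; apply: restrict_col_inj.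
exists (extend_col g); last by rewrite restrict_extend_col.
by rewrite inE extend_col_proper // colour_matching_extend // eqxx.
Qed.

End Fibre.

Lemma ncol_biclique :
  ncol (biclique B) n = \sum_(i < j.+1) ncross i * n ^_ (j + k - i).
Proof.
rewrite [LHS](_ : _ = #|[set f | proper_col f]|) // -sum1_card.
rewrite (partition_big colour_matching cross_matching) /=; last first.
  by move=> f; rewrite inE; apply: cross_colour_matching.
transitivity (\sum_(p | cross_matching p) n ^_ (j + k - cross_size p)).
  apply: eq_bigr => p pc; rewrite [j + k]addnC -addnBA ?cross_size_le //.
  by rewrite -(card_colour_fibre pc) -sum1_card; apply: eq_bigl => f; rewrite !inE.
rewrite (partition_big (fun p => inord (cross_size p) : 'I_j.+1) xpredT) //=.
apply: eq_bigr => i _; rewrite -sum_nat_const.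
have size_lt p : cross_size p < j.+1 := cross_size_le p.
apply: eq_big => [p|p /andP[_ /eqP <-]]; last by rewrite inordK.
by rewrite inE -(inj_eq val_inj) /= inordK.
Qed.

End Colourings.

Local Notation ce := (compl_rel (biclique B)).

Lemma compl_biclique_lr a b : ce (inl a) (inr b) = ~~ B a b. Proof. by []. Qed.

Lemma compl_biclique_rl a b : ce (inr b) (inl a) = ~~ B a b. Proof. by []. Qed.

Lemma compl_biclique_ll a a' : ce (inl a) (inl a') = false.
Proof. by rewrite /compl_rel /=; case: (eqVneq a a') => [->|->]; rewrite ?eqxx ?andbF. Qed.

Lemma compl_biclique_rr b b' : ce (inr b) (inr b') = false.
Proof. by rewrite /compl_rel /=; case: (eqVneq b b') => [->|->]; rewrite ?eqxx ?andbF. Qed.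

Definition compl_bicliqueE :=
  (compl_biclique_lr, compl_biclique_rl, compl_biclique_ll, compl_biclique_rr).

Definition cross_edge (a : 'I_j) (b : 'I_k) : {set V} := [set inl a; inr b].

Lemma cross_edge_inj a b a' b' : cross_edge a b = cross_edge a' b' -> a = a' /\ b = b'.
Proof.
move=> E; have : inl a \in cross_edge a' b' by rewrite -E /cross_edge !inE eqxx.
have : inr b \in cross_edge a' b' by rewrite -E /cross_edge !inE eqxx orbT.
by rewrite /cross_edge !inE => /orP[/eqP//|/eqP[->]] /orP[/eqP[->]|/eqP//].
Qed.

Lemma edge_compl_biclique E :
  is_edge ce E = [exists a, exists b, ~~ B a b && (E == cross_edge a b)].
Proof.
apply/existsP/existsP => [[x /existsP[y /andP[cxy /eqP ->]]]|[a /existsP[b /andP[nB /eqP ->]]]].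
  case: x y cxy => [a|b] [a'|b'] //; rewrite compl_bicliqueE // => nB.
    by exists a; apply/existsP; exists b'; rewrite nB eqxx.
  by exists a'; apply/existsP; exists b; rewrite nB /cross_edge setUC eqxx.
by exists (inl a); apply/existsP; exists (inr b); rewrite compl_bicliqueE nB eqxx.
Qed.

Lemma matching_share M E1 E2 x : is_matching ce M -> E1 \in M -> E2 \in M ->
  x \in E1 -> x \in E2 -> E1 = E2.
Proof.
case/andP=> _ /forallP/(_ E1)/implyP disjM ME1 ME2 xE1 xE2; apply/eqP/negPn/negP => ne.
move/forallP/(_ E2): (disjM ME1); rewrite ME2 ne /= => dis.
by move: (disjointFr dis xE1); rewrite xE2.
Qed.

Definition matching_of (p : pfun) : {set {set V}} :=
  [set E | [exists a, exists b, (p a == Some b) && (E == cross_edge a b)]].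

Lemma matching_ofP (p : pfun) E :
  reflect (exists a b, p a = Some b /\ E = cross_edge a b) (E \in matching_of p).
Proof.
rewrite inE; apply: (iffP existsP) => [[a /existsP[b /andP[/eqP pa /eqP ->]]]|[a [b [pa ->]]]].
  by exists a, b.
by exists a; apply/existsP; exists b; rewrite pa !eqxx.
Qed.

Lemma matching_of_matching p : cross_matching p -> is_matching ce (matching_of p).
Proof.
case/cross_matchingP => pinj pnB; apply/andP; split.
  apply/forallP => E; apply/implyP => /matching_ofP[a [b [pa ->]]].
  rewrite edge_compl_biclique; apply/existsP; exists a; apply/existsP; exists b.
  by rewrite (pnB _ _ pa) eqxx.
apply/forallP => E1; apply/implyP => /matching_ofP[a1 [b1 [pa1 ->]]].
apply/forallP => E2; apply/implyP => /matching_ofP[a2 [b2 [pa2 ->]]].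
apply/implyP => ne; apply/pred0P => x /=; apply/negP => /andP[].
rewrite /cross_edge !inE => /orP[] /eqP -> /orP[] // /eqP[e12].
  by move: pa2 ne; rewrite -e12 pa1 => -[->]; rewrite eqxx.
by move: ne; rewrite -e12 in pa2 *; rewrite (pinj _ _ _ pa1 pa2) eqxx.
Qed.

Lemma card_matching_of p : #|matching_of p| = cross_size p.
Proof.
pose edge_at a := if p a is Some b then cross_edge a b else set0.
rewrite [matching_of p](_ : _ = edge_at @: [set a | p a != None]); last first.
  apply/setP => E; apply/matching_ofP/imsetP => [[a [b [pa ->]]]|[a]].
    by exists a; rewrite ?inE /edge_at pa.
  by rewrite inE /edge_at; case pa: (p a) => [b|] // _ ->; exists a, b.
rewrite card_in_imset // => a1 a2; rewrite !inE /edge_at.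
by case: (p a1) => [b1|] //; case: (p a2) => [b2|] // _ _ /cross_edge_inj[].
Qed.

Lemma matching_of_inj : injective matching_of.
Proof.
suff sub p p' a b : matching_of p = matching_of p' -> p a = Some b -> p' a = Some b.
  move=> p p' E; apply/ffunP => a; case pa: (p a) => [b|]; first by rewrite (sub _ _ _ _ E pa).
  by case pa': (p' a) => [b'|] //; rewrite (sub _ _ _ _ (esym E) pa') in pa.
move=> E pa; have : cross_edge a b \in matching_of p'.
  by rewrite -E; apply/matching_ofP; exists a, b.
by case/matching_ofP => a' [b' [pa' /cross_edge_inj[-> ->]]].
Qed.

Lemma matching_of_surj M : is_matching ce M -> exists2 p, cross_matching p & matching_of p = M.
Proof.
move=> Mm; pose p : pfun := [ffun a => [pick b | cross_edge a b \in M]].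
have pM a b : p a = Some b -> cross_edge a b \in M.
  by rewrite ffunE; case: pickP => // b' Mb' [<-].
have edgeM E : E \in M -> exists a b, ~~ B a b /\ E = cross_edge a b.
  case/andP: Mm => /forallP/(_ E)/implyP edges _ /edges.
  by rewrite edge_compl_biclique => /existsP[a /existsP[b /andP[nB /eqP ->]]]; exists a, b.
have p_cross : cross_matching p.
  apply/cross_matchingP; split => [a a' b pa pa'|a b pa].
    have := matching_share (x := inr b) Mm (pM _ _ pa) (pM _ _ pa').
    by rewrite /cross_edge !inE !eqxx !orbT => /(_ isT isT) /cross_edge_inj[].
  by have [a' [b' [nB /cross_edge_inj[-> ->]]]] := edgeM _ (pM _ _ pa).
exists p => //; apply/setP => E; apply/matching_ofP/idP => [[a [b [pa ->]]]|EM].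
  exact: pM.
have [a [b [_ Eab]]] := edgeM _ EM; exists a, b; split => //.
rewrite ffunE; case: pickP => [b' Mb'|/(_ b)]; last by rewrite -Eab EM.
have := matching_share (x := inl a) Mm Mb' EM.
by rewrite Eab /cross_edge !inE !eqxx => /(_ isT isT) /cross_edge_inj[_ ->].
Qed.

Lemma nmatch_compl_biclique i : nmatch ce i = ncross i.
Proof.
rewrite /nmatch /ncross -(card_in_imset (f := matching_of)) => [|? ? _ _]; last exact: matching_of_inj.
apply: eq_card => M; rewrite inE; apply/idP/imsetP => [/andP[Mm /eqP <-]|[p]].
  by have [p pc <-] := matching_of_surj Mm; exists p; rewrite // inE pc card_matching_of eqxx.
by rewrite inE => /andP[pc /eqP <-] ->; rewrite matching_of_matching // card_matching_of eqxx.
Qed.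

End Biclique.

Lemma ffactnD n k m : n ^_ (k + m) = n ^_ k * (n - k) ^_ m.
Proof.
have [le_kn|lt_nk] := leqP k n; last first.
  by rewrite (ffact_small lt_nk) mul0n ffact_small // (leq_trans lt_nk) // leq_addr.
elim: m => [|m IHm]; first by rewrite addn0 muln1.
by rewrite addnS !ffactnSr IHm subnDA mulnA.
Qed.

Local Open Scope ring_scope.

Lemma big_ord_geq_shift (R : nmodType) (j l : nat) (F : nat -> R) : (l <= j)%N ->
  \sum_(i < j.+1 | (l <= i)%N) F i = \sum_(r < (j - l)%N.+1) F (r + l)%N.
Proof.
move=> le_lj; rewrite (eq_bigl (fun i : 'I_j.+1 => xpredT (i : nat) && (l <= i)%N)) //.
by rewrite -(@big_geq_mkord R 0 +%R l j.+1 xpredT) (big_addn 0 _ l) big_mkord subSn.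
Qed.

Lemma horner_falling m x : (falling m).[x] = \prod_(i < m) (x - i%:R).
Proof. by rewrite horner_prod; apply: eq_bigr => i _; rewrite hornerXsubC. Qed.

Lemma horner_falling0 x : (falling 0).[x] = 1.
Proof. by rewrite horner_falling big_ord0. Qed.

Lemma horner_fallingSr m x : (falling m.+1).[x] = (falling m).[x] * (x - m%:R).
Proof. by rewrite !horner_falling big_ord_recr. Qed.

Lemma horner_fallingS m x : (falling m.+1).[x] = x * (falling m).[x - 1].
Proof.
rewrite !horner_falling big_ord_recl subr0; congr (_ * _); apply: eq_bigr => i _.
by rewrite lift0 -addn1 natrD opprD addrA addrAC.
Qed.

Lemma horner_falling_nat m (n : nat) : (falling m).[n%:R] = (n ^_ m)%:R.
Proof.
elim: m => [|m IHm]; first by rewrite horner_falling0.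
rewrite horner_fallingSr IHm ffactnSr natrM.
have [le_mn|lt_nm] := leqP m n; first by rewrite natrB.
by rewrite ffact_small // !mul0r.
Qed.

Lemma horner_falling_opp m y :
  (-1) ^+ m * (falling m).[- y] = (falling m).[y + m%:R - 1].
Proof.
elim: m y => [|m IHm] y; first by rewrite !horner_falling0 mul1r.
rewrite -natr1 addrA addrK [in RHS]horner_fallingS -IHm horner_fallingSr.
by rewrite exprS mulN1r -opprD mulrN mulrNN mulrA mulrC.
Qed.

Lemma horner_fallingD n x y :
  (falling n).[x + y] =
  \sum_(r < n.+1) 'C(n, r)%:R * (falling (n - r)).[x] * (falling r).[y].
Proof.
elim: n => [|n IHn]; first by rewrite big_ord1 !horner_falling0 bin0 !mulr1.
pose t r := 'C(n, r)%:R * (falling (n - r)).[x] * (falling r).[y].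
have split_bin : \sum_(r < n.+2) 'C(n.+1, r)%:R * (falling (n.+1 - r)).[x] * (falling r).[y] =
    \sum_(r < n.+2) 'C(n, r)%:R * (falling (n.+1 - r)).[x] * (falling r).[y] +
    \sum_(r < n.+1) t r * (y - r%:R).
  rewrite big_ord_recl [in RHS]big_ord_recl !bin0 -addrA; congr (_ + _).
  rewrite -big_split; apply: eq_bigr => i _.
  by rewrite lift0 subSS binS natrD horner_fallingSr !mulrDl !mulrA.
have shift_x : \sum_(r < n.+2) 'C(n, r)%:R * (falling (n.+1 - r)).[x] * (falling r).[y] =
    \sum_(r < n.+1) t r * (x - (n - r)%:R).
  rewrite big_ord_recr /= bin_small // !mul0r addr0.
  apply: eq_bigr => i _; have le_in : (i <= n)%N := ltn_ord i.
  by rewrite subSn // horner_fallingSr !mulrA mulrAC.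
rewrite split_bin shift_x -big_split horner_fallingSr IHn mulr_suml.
apply: eq_bigr => i _; have le_in : (i <= n)%N := ltn_ord i.
rewrite /t /= -mulrDr; congr (_ * _).
by rewrite natrB // opprB addrACA (addrAC i%:R) subrr add0r addrAC.
Qed.

Lemma size_falling m : size (falling m) = m.+1.
Proof. by rewrite size_prod_XsubC /index_enum unlock /= -enumT size_enum_ord. Qed.

Lemma falling_monic m : falling m \is monic.
Proof. exact: monic_prod_XsubC. Qed.

Definition shifted_falling (a : int) (m : nat) : {poly int} := falling m \Po ('X - a%:P).

Lemma horner_shifted_falling a m x : (shifted_falling a m).[x] = (falling m).[x - a].
Proof. by rewrite horner_comp hornerXsubC. Qed.

Lemma size_shifted_falling a m : size (shifted_falling a m) = m.+1.
Proof. by rewrite size_comp_poly2 ?size_XsubC // size_falling. Qed.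

Lemma shifted_falling_monic a m : shifted_falling a m \is monic.
Proof.
apply/monicP; rewrite lead_coef_comp ?size_XsubC // lead_coefXsubC expr1n mulr1.
exact/monicP/falling_monic.
Qed.

Lemma poly_eq_on_nat (R : numDomainType) (p q : {poly R}) :
  (forall n : nat, p.[n%:R] = q.[n%:R]) -> p = q.
Proof.
move=> pq; apply/eqP; rewrite -subr_eq0; apply/negPn/negP => nz.
pose rs : seq R := [seq i%:R | i <- iota 0 (size (p - q))].
have roots : all (root (p - q)) rs.
  by apply/allP => _ /mapP[i _ ->]; rewrite /root hornerD hornerN pq subrr.
have uniq_rs : uniq rs.
  by rewrite map_inj_uniq ?iota_uniq // => i i' /eqP; rewrite eqr_nat => /eqP.
by have := max_poly_roots nz roots uniq_rs; rewrite size_map size_iota ltnn.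
Qed.

Lemma eq_coord_monic (R : nzRingType) (P : nat -> {poly R}) (N : nat) (u v : nat -> R) :
  (forall m, size (P m) = m.+1) -> (forall m, P m \is monic) ->
  \sum_(i < N.+1) u i *: P (N - i)%N = \sum_(i < N.+1) v i *: P (N - i)%N ->
  forall i, (i <= N)%N -> u i = v i.
Proof.
move=> sizeP monP.
have coef_top M (w : nat -> R) : (\sum_(i < M.+1) w i *: P (M - i)%N)`_M = w 0%N.
  rewrite coef_sum big_ord_recl coefZ subn0 big1 ?addr0 => [|i _].
    by have := monicP (monP M); rewrite /lead_coef sizeP /= => ->; rewrite mulr1.
  rewrite coefZ nth_default ?mulr0 // sizeP ltn_subrL /=; exact: leq_ltn_trans (ltn_ord i).
elim: N u v => [|N IHN] u v eq_uv.
  by case=> [|i] // _; rewrite -(coef_top 0%N u) -(coef_top 0%N v) eq_uv.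
have u0 : u 0%N = v 0%N by rewrite -(coef_top N.+1 u) -(coef_top N.+1 v) eq_uv.
case=> [//|i] le_iN; apply: (IHN (fun i => u i.+1) (fun i => v i.+1)) le_iN.
by move: eq_uv; rewrite big_ord_recl [RHS]big_ord_recl u0 => /addrI.
Qed.

Lemma natr_ffactnD n k m :
  (n ^_ (k + m))%:R = (n ^_ k)%:R * (falling m).[n%:R - k%:R] :> int.
Proof.
have [le_kn|lt_nk] := leqP k n; last first.
  by rewrite (ffact_small lt_nk) mul0r ffact_small // (leq_trans lt_nk) // leq_addr.
by rewrite -natrB // horner_falling_nat -natrM ffactnD.
Qed.

Lemma chromatic_biclique_factor (j k : nat) (B : 'I_j -> 'I_k -> bool) (g : {poly int}) :
  is_chromatic_poly (biclique B) (falling k * g) ->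
  g = \sum_(i < j.+1)
        (nmatch (compl_rel (biclique B)) i)%:R *: shifted_falling k%:R (j - i).
Proof.
move=> hg; apply: (@mulfI _ (falling k)); first exact: monic_neq0 (falling_monic k).
apply: poly_eq_on_nat => n; rewrite hg ncol_biclique hornerM horner_sum horner_falling_nat.
rewrite mulr_sumr natr_sum; apply: eq_bigr => i _; have le_ij : (i <= j)%N := ltn_ord i.
rewrite hornerZ horner_shifted_falling nmatch_compl_biclique natrM mulrCA -natr_ffactnD.
by rewrite addnC -addnBA.
Qed.

Section Reflection.
Variables (kG kH j : nat) (c : int).

Definition reflection_arg (l : nat) : int := (kG + kH + j)%:R - c - l%:R - 1.

Definition reflected_coef (m : nat -> int) (i : nat) : int :=
  \sum_(l < i.+1)
     (-1) ^+ l * m l * ('C(j - l, j - i))%:R * (falling (i - l)).[reflection_arg l].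

Lemma horner_falling_reflect (l : nat) (x : int) : (l <= j)%N ->
  (-1) ^+ j * (falling (j - l)).[c - x - kH%:R] =
  (-1) ^+ l * \sum_(i < j.+1 | (l <= i)%N)
     'C(j - l, j - i)%:R * (falling (i - l)).[reflection_arg l] * (falling (j - i)).[x - kG%:R].
Proof.
move=> le_lj; have -> : (-1) ^+ j = (-1) ^+ l * (-1) ^+ (j - l) :> int.
  by rewrite -exprD subnKC.
rewrite -mulrA; congr (_ * _).
have -> : c - x - kH%:R = - (x + kH%:R - c) by rewrite opprB opprD addrA.
rewrite horner_falling_opp (natrB _ le_lj).
have -> : x + kH%:R - c + (j%:R - l%:R) - 1 = x - kG%:R + reflection_arg l.
  by rewrite /reflection_arg !natrD; ring.
rewrite horner_fallingD (big_ord_geq_shift (fun i => 'C(j - l, j - i)%:R *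
  (falling (i - l)).[reflection_arg l] * (falling (j - i)).[x - kG%:R]) le_lj).
apply: eq_bigr => r _; have le_r : (r <= j - l)%N := ltn_ord r.
by rewrite addnK addnC subnDA bin_sub // mulrAC.
Qed.

Lemma reflect_shifted_falling_sum (m : nat -> int) :
  (-1) ^+ j *: ((\sum_(l < j.+1) m l *: shifted_falling kH%:R (j - l)) \Po (c%:P - 'X)) =
  \sum_(i < j.+1) reflected_coef m i *: shifted_falling kG%:R (j - i).
Proof.
apply: poly_eq_on_nat => n; set x : int := n%:R.
pose F (l i : nat) := (-1) ^+ l * m l * 'C(j - l, j - i)%:R *
  (falling (i - l)).[reflection_arg l] * (falling (j - i)).[x - kG%:R].
rewrite hornerZ horner_comp hornerD hornerN hornerC hornerX !horner_sum mulr_sumr.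
transitivity (\sum_(l < j.+1) \sum_(i < j.+1 | (l <= i)%N) F l i).
  apply: eq_bigr => l _; rewrite hornerZ horner_shifted_falling mulrCA.
  rewrite horner_falling_reflect; last exact: ltn_ord l.
  by rewrite !mulr_sumr; apply: eq_bigr => i _; rewrite !mulrA (mulrC (m l)).
rewrite (exchange_big_dep xpredT) //=; apply: eq_bigr => i _.
rewrite hornerZ horner_shifted_falling /reflected_coef mulr_suml.
by rewrite [RHS](big_ord_widen j.+1 (F ^~ i) (ltn_ord i)).
Qed.
End Reflection.

Unset Implicit Arguments.

Theorem mainTheorem3 (j kG kH : nat) (hj : (0 < j)%N) (hjk : (j <= kG)%N) (hk : (kG <= kH)%N)
  (BG : 'I_j -> 'I_kG -> bool) (BH : 'I_j -> 'I_kH -> bool)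
  (g h : {poly int})
  (hg : is_chromatic_poly (biclique BG) (falling kG * g))
  (hh : is_chromatic_poly (biclique BH) (falling kH * h))
  (c : int) :
  g = (-1) ^+ j *: (h \Po (c%:P - 'X)) <->
  (forall i : nat, (i <= j)%N ->
     (nmatch (compl_rel (biclique BG)) i)%:R =
     \sum_(l < i.+1)
        (-1) ^+ l * (nmatch (compl_rel (biclique BH)) l)%:R
        * ('C(j - l, j - i))%:R
        * (falling (i - l)).[(kG + kH + j)%:R - c - (l : nat)%:R - 1]).
Proof.
pose mG i : int := (nmatch (compl_rel (biclique BG)) i)%:R.
pose mH i : int := (nmatch (compl_rel (biclique BH)) i)%:R.
rewrite (chromatic_biclique_factor hg) (chromatic_biclique_factor hh).
rewrite (reflect_shifted_falling_sum kG kH j c mH).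
change (\sum_(i < j.+1) mG i *: shifted_falling kG%:R (j - i) =
        \sum_(i < j.+1) reflected_coef kG kH j c mH i *: shifted_falling kG%:R (j - i) <->
        (forall i, (i <= j)%N -> mG i = reflected_coef kG kH j c mH i)).
split => [|eq_coef].
  exact: eq_coord_monic (@size_shifted_falling _) (@shifted_falling_monic _).
by apply: eq_bigr => i _; rewrite eq_coef // -ltnS.
Qed.
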